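(* Let $1\le r\le n$, $A\in\mathrm{SGL}_n(\mathbb{F}_2)$, and let $\mathbf{x}_1,\ldots,\mathbf{x}_r\in\mathbb{F}_2^n$ be linearly independent with $\mathbf{x}_i^{\top}A^{-1}\mathbf{x}_j=1$ for all $i,j$. If $\sum_{i=1}^r\mathbf{x}_i\mathbf{x}_i^{\top}=\sum_{i=1}^r\mathbf{y}_i\mathbf{y}_i^{\top}$ for some $\mathbf{y}_1,\ldots,\mathbf{y}_r\in\mathbb{F}_2^n$, then $\mathbf{y}_i^{\top}A^{-1}\mathbf{y}_j=1$ for all $i,j$.
   Context: $\mathrm{SGL}_n(\mathbb{F}_2)$ is the set of invertible symmetric $n\times n$ matrices over the binary field $\mathbb{F}_2$. *)

From mathcomp Require Import all_boot all_algebra.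
Set Implicit Arguments. Unset Strict Implicit. Unset Printing Implicit Defensive.
Import GRing.Theory.
Local Open Scope ring_scope.

Definition SGL (n : nat) : pred 'M['F_2]_n :=
  fun A => (A^T == A) && (A \in unitmx).
Arguments SGL n : clear implicits.

Definition bform (n : nat) (M : 'M['F_2]_n) (x y : 'cV['F_2]_n) : 'F_2 :=
  (x^T *m M *m y) 0 0.

From mathcomp Require Import all_boot all_algebra.
Set Implicit Arguments.
Unset Strict Implicit.
Unset Printing Implicit Defensive.
Import GRing.Theory.
Local Open Scope ring_scope.

(* Write P and Q for the r x n matrices with rows x_i^T and y_i^T, so that the
   hypothesis reads P^T P = Q^T Q.  Since P has full row rank, this Gram
   identity forces Q = C P for an r x r matrix C with C C^T = 1.  Over F_2 the
   diagonal of C C^T is the vector of row sums of C (as a^2 = a), so C fixes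
   the all-ones vector 1 and hence the all-ones matrix 1 1^T.  Therefore
   Q A^-1 Q^T = C (P A^-1 P^T) C^T = C (1 1^T) C^T = 1 1^T. *)

Definition vecs_mx (R : Type) (n r : nat) (x : 'I_r -> 'cV[R]_n) : 'M[R]_(r, n) :=
  \matrix_(i < r) (x i)^T.

Lemma sum_outer_vecs_mx (R : pzRingType) (n r : nat) (x : 'I_r -> 'cV[R]_n) :
  \sum_(i < r) (x i *m (x i)^T) = (vecs_mx x)^T *m vecs_mx x.
Proof.
apply/matrixP => a b; rewrite summxE !mxE; apply: eq_bigr => i _.
by rewrite !mxE big_ord1 !mxE.
Qed.

Lemma bform_vecs_mx (n r : nat) (B : 'M['F_2]_n) (x : 'I_r -> 'cV['F_2]_n) i j :
  bform B (x i) (x j) = (vecs_mx x *m B *m (vecs_mx x)^T) i j.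
Proof.
rewrite /bform !mxE; apply: eq_bigr => k _; rewrite !mxE; congr (_ * _).
by apply: eq_bigr => l _; rewrite !mxE.
Qed.

Lemma row_free_gram_orthogonal (F : fieldType) (r n : nat) (P Q : 'M[F]_(r, n)) :
  row_free P -> P^T *m P = Q^T *m Q ->
  exists2 C : 'M[F]_r, C *m C^T = 1%:M & Q = C *m P.
Proof.
move=> /row_freeP [W PW] gramPQ.
pose C := Q *m W.
have PtC : P^T = Q^T *m C by rewrite mulmxA -gramPQ -mulmxA PW mulmx1.
have PCtQ : P = C^T *m Q by rewrite -[P]trmxK PtC trmx_mul trmxK.
have CtC : C^T *m C = 1%:M by rewrite -PW PCtQ -mulmxA.
have CCt : C *m C^T = 1%:M := mulmx1C CtC.
by exists C; rewrite // PCtQ mulmxA CCt mul1mx.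
Qed.

Lemma mulrr_F2 (a : 'F_2) : a * a = a.
Proof. by case: a => [[|[|m]] //= ?]; apply/val_inj. Qed.

Lemma mulmx_const1_F2 (m n : nat) (M : 'M['F_2]_(m, n)) :
  M *m const_mx 1 = \col_i (M *m M^T) i i.
Proof.
apply/matrixP => i k; rewrite !mxE; apply: eq_bigr => j _.
by rewrite !mxE mulr1 mulrr_F2.
Qed.

Lemma orthogonal_F2_fix_const1 (r : nat) (C : 'M['F_2]_r) :
  C *m C^T = 1%:M -> C *m const_mx 1 = const_mx 1 :> 'cV_r.
Proof.
move=> CCt; rewrite mulmx_const1_F2 CCt.
by apply/matrixP => i k; rewrite !mxE eqxx.
Qed.

Lemma orthogonal_F2_conj_const1 (r : nat) (C : 'M['F_2]_r) :
  C *m C^T = 1%:M -> C *m const_mx 1 *m C^T = const_mx 1.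
Proof.
move=> CCt.
have ones_outer : const_mx 1 = (const_mx 1 : 'cV_r) *m (const_mx 1)^T :> 'M['F_2]_r.
  by apply/matrixP => i j; rewrite !mxE big_ord1 !mxE mulr1.
by rewrite ones_outer !mulmxA -mulmxA -trmx_mul orthogonal_F2_fix_const1.
Qed.

Theorem lemma4p8 (n r : nat) (A : 'M['F_2]_n) (x y : 'I_r -> 'cV['F_2]_n) :
  (1 <= r)%N -> (r <= n)%N -> A \in SGL n ->
  row_free (\matrix_(i < r) (x i)^T) ->
  (forall i j, bform (invmx A) (x i) (x j) = 1) ->
  \sum_(i < r) (x i *m (x i)^T) = \sum_(i < r) (y i *m (y i)^T) ->
  forall i j, bform (invmx A) (y i) (y j) = 1.
Proof.
move=> _ _ _ freeP formP.
rewrite !sum_outer_vecs_mx => /(row_free_gram_orthogonal freeP) [C CCt QCP] i j.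
set P := vecs_mx x in QCP *; set B := invmx A in formP *.
have PBP : P *m B *m P^T = const_mx 1.
  by apply/matrixP => k l; rewrite -bform_vecs_mx formP mxE.
have QBQ : vecs_mx y *m B *m (vecs_mx y)^T = C *m (P *m B *m P^T) *m C^T.
  by rewrite QCP trmx_mul !mulmxA.
by rewrite bform_vecs_mx QBQ PBP orthogonal_F2_conj_const1 // mxE.
Qed.
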